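(* Let $(X,d)$ be a complete metric space and $H(X)$ the space of nonempty compact subsets of $X$ with the Hausdorff metric $h$. Fix $n\in\mathbb{N}$ and for each $i\in\mathbb{N}$ let $F_i=\{X;f_{1,i},\dots,f_{n,i}\}$ with continuous maps $f_{r,i}:X\to X$, each a $\phi$-contraction with comparison function $\phi_{r,i}$; let $F_i(A)=\bigcup_{r=1}^n f_{r,i}(A)$ for $A\in H(X)$ and $\phi_i=\max_{r}\phi_{r,i}$. Suppose there is $A_1\in H(X)$ with $\sup_{i\in\mathbb{N}}h(F_i(A_1),A_1)<\infty$, and that $$\sum_{k=1}^\infty\phi_1\circ\phi_2\circ\cdots\circ\phi_k(t)<\infty\quad\text{for every }t>0.$$ Then there is a unique set $A^*\in H(X)$ such that for every $A\in H(X)$ the backward trajectory $\Psi_k(A)=F_1\circ F_2\circ\cdots\circ F_k(A)$ converges to $A^*$ in $(H(X),h)$.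
   Context: A comparison function is a non-decreasing map $\phi:[0,\infty)\to[0,\infty)$ such that $\phi^p(t)\to0$ as $p\to\infty$ for every $t\ge0$ ($\phi^p$ the $p$-fold composition). A map $f:X\to X$ is a $\phi$-contraction if $d(f(x),f(y))\le\phi(d(x,y))$ for all $x,y$. The Hausdorff metric is $h(A,B)=\max\{\max_{x\in A}\min_{y\in B}d(x,y),\max_{y\in B}\min_{x\in A}d(x,y)\}$. *)

From HB Require Import structures.
From mathcomp Require Import all_boot all_order all_algebra.
From mathcomp Require Import all_classical all_reals all_analysis.
Set Implicit Arguments. Unset Strict Implicit. Unset Printing Implicit Defensive.
Import Order.TTheory GRing.Theory Num.Theory.
Local Open Scope classical_set_scope.
Local Open Scope ring_scope.

Section Defs.
Variables (R : realType) (X : Type) (d : X -> X -> R).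

Definition is_metric : Prop :=
  [/\ forall x y, 0 <= d x y,
      forall x y, d x y = 0 <-> x = y,
      forall x y, d x y = d y x &
      forall x y z, d x z <= d x y + d y z].

Definition metric_complete : Prop :=
  forall u : nat -> X,
    (forall e : R, 0 < e -> exists N : nat, forall m n : nat,
        (N <= m)%N -> (N <= n)%N -> d (u m) (u n) < e) ->
    exists x : X, forall e : R, 0 < e -> exists N : nat, forall n : nat,
        (N <= n)%N -> d (u n) x < e.

Definition dball (x : X) (e : R) : set X := [set y | d x y < e].

Definition dopen (U : set X) : Prop :=
  forall x, U x -> exists2 e : R, 0 < e & dball x e `<=` U.

Definition dcompact (A : set X) : Prop :=
  forall (I : Type) (U : I -> set X),
    (forall i, dopen (U i)) -> A `<=` \bigcup_i U i ->
    exists J : set I, finite_set J /\ A `<=` \bigcup_(i in J) U i.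

Definition inHX (A : set X) : Prop := A !=set0 /\ dcompact A.

Definition dcontinuous (f : X -> X) : Prop :=
  forall x e, 0 < e -> exists2 del : R, 0 < del &
    forall y, d x y < del -> d (f x) (f y) < e.

Definition hexcess (A B : set X) : R :=
  sup [set inf [set d x y | y in B] | x in A].

Definition hausdorff (A B : set X) : R := Num.max (hexcess A B) (hexcess B A).

Definition phi_contraction (phi : R -> R) (f : X -> X) : Prop :=
  forall x y, d (f x) (f y) <= phi (d x y).
End Defs.

Definition comparison_function (R : realType) (phi : R -> R) : Prop :=
  [/\ forall t, 0 <= t -> 0 <= phi t,
      forall s t, 0 <= s -> s <= t -> phi s <= phi t &
      forall t, 0 <= t -> (fun p : nat => iter p phi t) @ \oo --> 0].

Definition IFS_image (X : Type) (n : nat) (f : 'I_n -> nat -> X -> X)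
  (i : nat) (A : set X) : set X :=
  \bigcup_(r in [set: 'I_n]) (f r i @` A).

Definition backward_traj (X : Type) (n : nat) (f : 'I_n -> nat -> X -> X)
  (k : nat) (A : set X) : set X :=
  foldr (fun i B => IFS_image f i B) A (iota 1 k).

Definition phi_max (R : realType) (n : nat) (phi : 'I_n -> nat -> R -> R)
  (i : nat) (t : R) : R :=
  \big[Num.max/0]_(r < n) phi r i t.

Definition phi_comp (R : realType) (n : nat) (phi : 'I_n -> nat -> R -> R)
  (k : nat) (t : R) : R :=
  foldr (fun i s => phi_max phi i s) t (iota 1 k).

(* Fix a0 in A1; the bound on h(F_i(A1), A1) yields K with d(a0, f_{r,i} a0) <= K
   for all r and i.  For an infinite word s of map indices, the points
   f_{s_1,1} o ... o f_{s_k,k} (a0) move by at most phi_1 o ... o phi_k (K) at step k,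
   a summable bound, so they converge to a point pi(s), uniformly in s at the rate of
   the tail of the series.  The candidate attractor is the range of pi: it is compact
   because pi is uniformly continuous on the compact code space, and for compact A
   every point of Psi_k(A) lies close to the point pi(s) of the same word, and
   conversely, which gives Psi_k(A) -> range pi.  Uniqueness holds because Hausdorff
   limits of the single sequence Psi_k(A1) are unique among compact sets. *)

From HB Require Import structures.
From mathcomp Require Import all_boot all_order all_algebra.
From mathcomp Require Import all_classical all_reals all_analysis.
Import Order.TTheory GRing.Theory Num.Theory.
Local Open Scope classical_set_scope.
Local Open Scope ring_scope.
Import numFieldNormedType.Exports.
Set Implicit Arguments. Unset Strict Implicit.

Lemma finite_set_nat_ub (J : set nat) :
  finite_set J -> exists N, forall j, J j -> (j <= N)%N.
Proof.
move=> /finite_fsetP [B ->].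
exists (\max_(i <- finmap.enum_fset B) i)%N => j jB.
exact: (@leq_bigmax_seq _ (finmap.enum_fset B) xpredT id j jB erefl).
Qed.

Section MetricSpace.
Variables (R : realType) (X : Type) (d : X -> X -> R).
Hypothesis hmet : is_metric d.

Let d_ge0 x y : 0 <= d x y. Proof. by case: hmet. Qed.
Let d_eq0 x y : d x y = 0 <-> x = y. Proof. by case: hmet. Qed.
Let dC x y : d x y = d y x. Proof. by case: hmet. Qed.
Let d_triangle x y z : d x z <= d x y + d y z. Proof. by case: hmet. Qed.

Definition dbounded (A : set X) : Prop :=
  forall z, exists c, forall a, A a -> d z a <= c.

Lemma dopen_dball x e : dopen d (dball d x e).
Proof.
move=> y /= hy; exists (e - d x y); first by rewrite subr_gt0.
move=> z /= hz; apply: le_lt_trans (d_triangle x y z) _.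
by rewrite -ltrBrDl.
Qed.

Lemma dopen_far x e : dopen d [set y | e < d x y].
Proof.
move=> y /= hy; exists (d x y - e); first by rewrite subr_gt0.
move=> z /= hz; have := d_triangle x z y; rewrite (dC z y) -lerBlDr.
by apply: lt_le_trans; rewrite ltrBrDl addrC -ltrBrDl.
Qed.

Lemma dcompact_bounded A : dcompact d A -> dbounded A.
Proof.
move=> cA z.
have cover : A `<=` \bigcup_(k in setT) dball d z k%:R.
  by move=> a _; exists (Num.bound (d z a)) => //; exact: archi_boundP.
have [J [fJ hJ]] := cA nat _ (fun k => @dopen_dball z _) cover.
have [N hN] := finite_set_nat_ub fJ.
exists N%:R => a /hJ [j /hN hj /= hza].
by apply/ltW/(lt_le_trans hza); rewrite ler_nat.
Qed.

Lemma dcompact_closed A x : dcompact d A ->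
  (forall e, 0 < e -> exists2 y, A y & d x y < e) -> A x.
Proof.
move=> cA hx; apply/not_notP => nAx.
have cover : A `<=` \bigcup_(k in setT) [set y | k.+1%:R^-1 < d x y].
  move=> y Ay; have dxy_gt0 : 0 < d x y.
    by rewrite lt_neqAle d_ge0 andbT eq_sym; apply/eqP => /d_eq0 xy; rewrite xy in nAx.
  exists (Num.bound (d x y)^-1) => //=.
  rewrite invf_plt ?posrE //; apply: lt_trans (archi_boundP _) _.
    by rewrite invr_ge0 ltW.
  by rewrite ltr_nat.
have [J [fJ hJ]] := cA nat _ (fun k => @dopen_far x _) cover.
have [N hN] := finite_set_nat_ub fJ.
have [y Ay hxy] := hx N.+1%:R^-1 (ltac:(by rewrite invr_gt0 ltr0n)).
have [j /hN jN /= hj] := hJ y Ay.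
have := lt_trans hj hxy; rewrite ltf_pV2 ?posrE // ltr_nat ltnS.
by move=> /leq_trans/(_ jN); rewrite ltnn.
Qed.

Lemma inf_dist_le (Q : set X) x y : Q y -> inf [set d x y | y in Q] <= d x y.
Proof. by move=> Qy; apply: ge_inf; [exists 0 => _ [? _ <-] | exists y]. Qed.

Lemma inf_dist_ge0 (Q : set X) x : Q !=set0 -> 0 <= inf [set d x y | y in Q].
Proof. by move=> [y Qy]; apply: lb_le_inf => [|_ [? _ <-]]; [exists (d x y), y|]. Qed.

Lemma hexcess_le (P Q : set X) c : P !=set0 ->
  (forall x, P x -> exists2 y, Q y & d x y <= c) -> hexcess d P Q <= c.
Proof.
move=> [x Px] hPQ; apply: ge_sup => [|_ [x' Px' <-]]; first by exists (inf [set d x y | y in Q]), x.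
by have [y Qy /(le_trans (inf_dist_le x' Qy))] := hPQ x' Px'.
Qed.

Lemma hexcess_ge0 (P Q : set X) : Q !=set0 -> 0 <= hexcess d P Q.
Proof.
move=> hQ; rewrite /hexcess.
have [hs|/sup_out ->//] := pselect (has_sup [set inf [set d x y | y in Q] | x in P]).
have [[_ [x Px _]] _] := hs; apply: le_trans (inf_dist_ge0 x hQ) _.
by apply: sup_upper_bound => //; exists x.
Qed.

Lemma hexcess_lt (P Q : set X) e : dbounded P -> Q !=set0 ->
  hexcess d P Q < e -> forall x, P x -> exists2 y, Q y & d x y < e.
Proof.
move=> bP [y0 Qy0] he x Px; have [c hc] := bP y0.
have ub : has_ubound [set inf [set d x y | y in Q] | x in P].
  exists c => _ [x' Px' <-]; apply: le_trans (inf_dist_le x' Qy0) _.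
  by rewrite dC hc.
have : inf [set d x y | y in Q] < e.
  by apply: le_lt_trans he; apply: ub_le_sup => //; exists x.
by case/inf_lt => [|_ [y Qy <-] hy]; [exists (d x y0), y0 | exists y].
Qed.

Lemma hausdorff_le (A B : set X) c :
  hexcess d A B <= c -> hexcess d B A <= c -> hausdorff d A B <= c.
Proof. by move=> hAB hBA; rewrite /hausdorff ge_max hAB hBA. Qed.

Lemma hexcess_le_hausdorff (A B : set X) : hexcess d A B <= hausdorff d A B.
Proof. by rewrite /hausdorff le_max lexx. Qed.

Lemma hexcessC_le_hausdorff (A B : set X) : hexcess d B A <= hausdorff d A B.
Proof. by rewrite /hausdorff le_max lexx orbT. Qed.

Lemma hausdorff_cvg_subset (P : nat -> set X) (A B : set X) :
  (forall k, P k !=set0) -> (forall k, dbounded (P k)) -> inHX d A -> inHX d B ->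
  (fun k => hausdorff d (P k) A) @ \oo --> 0 ->
  (fun k => hausdorff d (P k) B) @ \oo --> 0 -> B `<=` A.
Proof.
move=> P0 bP [A0 cA] [_ cB] PA PB y By; apply: (dcompact_closed cA) => e e0.
have e20 : 0 < e / 2 by rewrite divr_gt0.
have [N _ hN] := filterI (cvgr0_norm_lt _ PA _ e20) (cvgr0_norm_lt _ PB _ e20).
have [/(le_lt_trans (ler_norm _)) PAe /(le_lt_trans (ler_norm _)) PBe] :=
  hN N (leqnn N).
have [p PNp yp] := hexcess_lt (dcompact_bounded cB) (P0 N)
  (le_lt_trans (hexcessC_le_hausdorff _ _) PBe) By.
have [a Aa pa] := hexcess_lt (bP N) A0
  (le_lt_trans (hexcess_le_hausdorff _ _) PAe) PNp.
by exists a => //; apply: le_lt_trans (d_triangle y p a) _; rewrite (splitr e) ltrD.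
Qed.

Lemma hausdorff_cvg_unique (P : nat -> set X) (A B : set X) :
  (forall k, P k !=set0) -> (forall k, dbounded (P k)) -> inHX d A -> inHX d B ->
  (fun k => hausdorff d (P k) A) @ \oo --> 0 ->
  (fun k => hausdorff d (P k) B) @ \oo --> 0 -> B = A.
Proof.
by move=> P0 bP hA hB PA PB; apply/seteqP; split; apply: (hausdorff_cvg_subset P0).
Qed.

End MetricSpace.

Definition word_set (T : Type) (w : nat -> T) (k : nat) (r : T) : nat -> T :=
  fun i => if i == k then r else w i.

Definition cylinder (T : Type) (k : nat) (w : nat -> T) : set (nat -> T) :=
  [set s | forall i, (i < k)%N -> s i = w i].

Section CodeSpace.
Variables (R : realType) (X : Type) (d : X -> X -> R) (T : finType).
Variable pi : (nat -> T) -> X.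
Hypothesis pi_ucont : forall e, 0 < e -> exists k, forall s t,
  cylinder k t s -> d (pi s) (pi t) < e.

Section FiniteSubcover.
Variables (I : Type) (U : I -> set X).

Definition finitely_covered (k : nat) (w : nat -> T) : Prop :=
  exists J : set I, finite_set J /\ pi @` cylinder k w `<=` \bigcup_(i in J) U i.

Lemma not_finitely_covered_child k w : ~ finitely_covered k w ->
  exists r, ~ finitely_covered k.+1 (word_set w k r).
Proof.
move=> ncov; apply/not_notP => /forallNP children; apply: ncov.
have /choice [J hJ] : forall r, finitely_covered k.+1 (word_set w k r).
  by move=> r; apply/not_notP; exact: children.
exists (\bigcup_(r in setT) J r); split.
  by apply: bigcup_finite => [|r _]; [exact: finite_finset | case: (hJ r)].
move=> _ [s hs <-]; have [_ /(_ (pi s))] := hJ (s k).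
case=> [|j Jj Ujs]; last by exists j => //; exists (s k).
exists s => // i; rewrite ltnS leq_eqVlt /word_set.
by case/orP => [/eqP -> | ik]; rewrite ?eqxx // (ltn_eqF ik) hs.
Qed.

End FiniteSubcover.

Fixpoint koenig_word (t0 : T) (ch : nat -> (nat -> T) -> T) (k : nat) : nat -> T :=
  if k is k'.+1 then word_set (koenig_word t0 ch k') k' (ch k' (koenig_word t0 ch k'))
  else fun=> t0.

Lemma koenig_word_prefix t0 ch k i :
  (i < k)%N -> koenig_word t0 ch k i = koenig_word t0 ch i.+1 i.
Proof.
elim: k => [|k IH] //; rewrite ltnS leq_eqVlt => /orP[/eqP -> // | ik].
by rewrite /= /word_set (ltn_eqF ik) IH.
Qed.

(* Koenig's lemma: without a finite subcover there is a nested sequence of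
   cylinders none of which is finitely covered, yet the image of a small enough
   cylinder around their common word lies in a single open set of the cover. *)
Lemma dcompact_code_image (t0 : T) : dcompact d (range pi).
Proof.
move=> I U Uo cover; apply/not_notP => ncov.
have /choice [ch hch] : forall kw : nat * (nat -> T), exists r,
    ~ finitely_covered U kw.1 kw.2 -> ~ finitely_covered U kw.1.+1 (word_set kw.2 kw.1 r).
  move=> [k w] /=; have [/not_finitely_covered_child [r hr]|] :=
    pselect (~ finitely_covered U k w); last by exists t0.
  by exists r.
pose W := koenig_word t0 (fun k w => ch (k, w)).
have ncovW k : ~ finitely_covered U k (W k).
  elim: k => [|k IH]; last exact: (hch (k, W k)).
  move=> [J [fJ hJ]]; apply: ncov; exists J; split => //.
  by move=> _ [s _ <-]; apply: hJ; exists s.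
pose s i := W i.+1 i.
have [i0 _ Ui0s] := cover (pi s) (ltac:(by exists s)).
have [e e0 ballU] := Uo i0 (pi s) Ui0s.
have [k hk] := pi_ucont e0.
apply: (ncovW k); exists [set i0]; split; first exact: finite_set1.
move=> _ [t ht <-]; exists i0 => //; apply/ballU/hk => i ik.
by rewrite /s /W -(koenig_word_prefix _ _ ik) ht.
Qed.

End CodeSpace.

Section Trajectories.
Variables (X : Type) (n : nat) (f : 'I_n -> nat -> X -> X).

Definition word_comp (s : nat -> 'I_n) (m k : nat) (x : X) : X :=
  foldr (fun i y => f (s i) i y) x (iota m k).

Lemma eq_word_comp s s' m k x : (forall i, (m <= i < m + k)%N -> s i = s' i) ->
  word_comp s m k x = word_comp s' m k x.
Proof.
elim: k m => [|k IH] m ss' //; rewrite /word_comp /=.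
rewrite ss'; last by rewrite leqnn addnS ltnS leq_addr.
congr (f _ _ _); apply: IH => i /andP[mi ik]; apply: ss'.
by rewrite (ltnW mi) addnS -addSn.
Qed.

Lemma word_compS s m k x :
  word_comp s m k.+1 x = word_comp s m k (f (s (m + k)%N) (m + k)%N x).
Proof. by rewrite /word_comp -addn1 iotaD foldr_cat. Qed.

Lemma foldr_IFS_imageP (r0 : 'I_n) A m k y :
  foldr (fun i B => IFS_image f i B) A (iota m k) y <->
  exists s, exists2 a, A a & y = word_comp s m k a.
Proof.
elim: k m y => [|k IH] m y /=.
  by split=> [Ay|[s [a Aa ->]]]; first exists (fun=> r0), y.
split=> [[r _ [z /IH [s [a Aa ->]] <-]]|[s [a Aa ->]]].
  exists (word_set s m r), a => //; rewrite /word_comp /= {1}/word_set eqxx.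
  congr (f r m _); apply: eq_word_comp => i /andP[mi _].
  by rewrite /word_set (gtn_eqF mi).
by exists (s m) => //; exists (word_comp s m.+1 k a) => //; apply/IH; exists s, a.
Qed.

Lemma backward_trajP (r0 : 'I_n) A k y :
  backward_traj f k A y <-> exists s, exists2 a, A a & y = word_comp s 1 k a.
Proof. exact: foldr_IFS_imageP. Qed.

End Trajectories.

Definition phi_comp_from (R : realType) (n : nat) (phi : 'I_n -> nat -> R -> R)
  (m k : nat) (t : R) : R :=
  foldr (fun i u => phi_max phi i u) t (iota m k).

Section Contraction.
Variables (R : realType) (X : Type) (d : X -> X -> R).
Hypothesis hmet : is_metric d.
Variables (n : nat) (f : 'I_n -> nat -> X -> X) (phi : 'I_n -> nat -> R -> R).
Hypothesis hphi : forall r i, (1 <= i)%N -> comparison_function (phi r i).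
Hypothesis hcontr : forall r i, (1 <= i)%N -> phi_contraction d (phi r i) (f r i).

Let d_ge0 x y : 0 <= d x y. Proof. by case: hmet. Qed.
Let dC x y : d x y = d y x. Proof. by case: hmet. Qed.
Let d_triangle x y z : d x z <= d x y + d y z. Proof. by case: hmet. Qed.

Lemma phi_max_ge0 i t : 0 <= phi_max phi i t.
Proof. by rewrite /phi_max; elim/big_rec: _ => // r y _ hy; rewrite le_max hy orbT. Qed.

Lemma le_phi_max r i t : phi r i t <= phi_max phi i t.
Proof. exact: (le_bigmax 0 (fun r => phi r i t) r). Qed.

Lemma phi_max_le i s t : (1 <= i)%N -> 0 <= s -> s <= t ->
  phi_max phi i s <= phi_max phi i t.
Proof.
move=> i1 s0 st; apply: le_bigmax2 => r _.
by have [_ phi_mono _] := hphi r i1; exact: phi_mono.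
Qed.

Lemma phi_comp_from_ge0 m k t : 0 <= t -> 0 <= phi_comp_from phi m k t.
Proof. by case: k => [|k] //= _; exact: phi_max_ge0. Qed.

Lemma phi_comp_from_le m k s t : (1 <= m)%N -> 0 <= s -> s <= t ->
  phi_comp_from phi m k s <= phi_comp_from phi m k t.
Proof.
move=> m1 s0 st; elim: k m m1 => [|k IH] m m1 //=.
by apply: phi_max_le => //; [exact: phi_comp_from_ge0 | exact: IH].
Qed.

Lemma word_comp_contraction s m k x y : (1 <= m)%N ->
  d (word_comp f s m k x) (word_comp f s m k y) <= phi_comp_from phi m k (d x y).
Proof.
elim: k m => [|k IH] m m1 //.
rewrite /word_comp /= -/(word_comp f s m.+1 k x) -/(word_comp f s m.+1 k y).
apply: le_trans (@hcontr (s m) m m1 _ _) (le_trans (le_phi_max (s m) _ _) _).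
by apply: phi_max_le => //; exact: IH.
Qed.

Lemma IFS_image_bounded i A : (1 <= i)%N -> dbounded d A -> dbounded d (IFS_image f i A).
Proof.
move=> i1 bA z; have [c hc] := bA z.
exists (\big[Num.max/0]_(r < n) d z (f r i z) + phi_max phi i c).
move=> _ [r _ [a Aa <-]]; apply: le_trans (d_triangle z (f r i z) _) _.
apply: lerD; first exact: (le_bigmax 0 (fun r => d z (f r i z)) r).
apply: le_trans (@hcontr r i i1 _ _) (le_trans (le_phi_max r _ _) _).
exact: phi_max_le (hc a Aa).
Qed.

Lemma backward_traj_bounded k A : dbounded d A -> dbounded d (backward_traj f k A).
Proof.
move=> bA; have : all (leq 1) (iota 1 k) by apply/allP => i; rewrite mem_iota => /andP[].
rewrite /backward_traj; elim: (iota 1 k) => [|i s IH] //= /andP[i1 s1].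
exact/IFS_image_bounded/IH.
Qed.

Lemma IFS_base_point_bounded A a0 : A a0 -> dbounded d A ->
  (exists M, forall i, (1 <= i)%N -> hausdorff d (IFS_image f i A) A <= M) ->
  exists2 K, 0 < K & forall r i, (1 <= i)%N -> d a0 (f r i a0) <= K.
Proof.
move=> Aa0 bA [M hM]; have [D hD] := bA a0.
exists (Num.max 1 (D + (M + 1))) => [|r i i1]; first by rewrite lt_max ltr01.
have Ffa0 : IFS_image f i A (f r i a0) by exists r => //; exists a0.
have excess_lt : hexcess d (IFS_image f i A) A < M + 1.
  apply: le_lt_trans (hexcess_le_hausdorff _ _ _) (le_lt_trans (hM i i1) _).
  by rewrite ltrDl.
have [y Ay fa0y] := hexcess_lt hmet (IFS_image_bounded i1 bA) (ex_intro _ a0 Aa0)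
  excess_lt Ffa0.
apply: le_trans (d_triangle a0 y _) _; rewrite le_max; apply/orP; right.
by apply: lerD; [exact: hD | rewrite dC ltW].
Qed.

End Contraction.

Section SeriesTail.
Variables (R : realType) (u : nat -> R).
Hypotheses (u_ge0 : forall k, 0 <= u k) (u_sum : cvgn (series u)).

Definition series_tail (k : nat) : R := limn (series u) - series u k.

Let series_le_lim k : series u k <= limn (series u).
Proof. exact/nondecreasing_cvgn_le/u_sum/nondecreasing_series. Qed.

Lemma series_tail_ge0 k : 0 <= series_tail k.
Proof. by rewrite subr_ge0. Qed.

Lemma series_sub_le_tail k m : series u m - series u k <= series_tail k.
Proof. by rewrite lerD2r. Qed.

Lemma series_tail_cvg0 : series_tail @ \oo --> 0.
Proof. by rewrite -(subrr (limn (series u))); apply: cvgB => //; exact: cvg_cst. Qed.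

End SeriesTail.

Section Attractor.
Variables (R : realType) (X : Type) (d : X -> X -> R).
Hypotheses (hmet : is_metric d) (hcomp : metric_complete d).
Variables (n : nat) (f : 'I_n -> nat -> X -> X) (phi : 'I_n -> nat -> R -> R).
Hypothesis hphi : forall r i, (1 <= i)%N -> comparison_function (phi r i).
Hypothesis hcontr : forall r i, (1 <= i)%N -> phi_contraction d (phi r i) (f r i).
Variables (a0 : X) (K : R).
Hypothesis K_gt0 : 0 < K.
Hypothesis base_point_bounded : forall r i, (1 <= i)%N -> d a0 (f r i a0) <= K.
Hypothesis hsum : forall t : R, 0 < t ->
  cvg (series (fun k : nat => phi_comp phi k.+1 t : R^o) @ \oo).

Let d_ge0 x y : 0 <= d x y. Proof. by case: hmet. Qed.
Let d_eq0 x y : d x y = 0 <-> x = y. Proof. by case: hmet. Qed.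
Let dC x y : d x y = d y x. Proof. by case: hmet. Qed.
Let d_triangle x y z : d x z <= d x y + d y z. Proof. by case: hmet. Qed.

Let orbit s k := word_comp f s 1 k a0.
Let u k := phi_comp phi k.+1 K.
Let tail := series_tail u.

Let u_ge0 k : 0 <= u k.
Proof. by apply: (@phi_comp_from_ge0 _ _ phi 1 k.+1); apply: ltW. Qed.

Let tail_ge0 k : 0 <= tail k.
Proof. exact: series_tail_ge0 u_ge0 (hsum K_gt0) k. Qed.

Lemma orbit_step s k : d (orbit s k.+1) (orbit s k.+2) <= u k.
Proof.
rewrite /orbit (word_compS _ _ 1 k.+1).
apply: le_trans (word_comp_contraction hmet hphi hcontr _ _ _ _ (leqnn 1)) _.
by apply: (phi_comp_from_le hphi) => //; exact: base_point_bounded.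
Qed.

Lemma orbit_dist s k m : (k <= m)%N -> d (orbit s k.+1) (orbit s m.+1) <= tail k.
Proof.
move=> km; apply: le_trans (series_sub_le_tail u_ge0 (hsum K_gt0) k m).
rewrite -(subnKC km); elim: (m - k)%N => [|p IH].
  by rewrite addn0 subrr; have /d_eq0 -> : orbit s k.+1 = orbit s k.+1.
apply: le_trans (d_triangle _ (orbit s (k + p).+1) _) _.
by rewrite addnS seriesSr addrAC lerD // orbit_step.
Qed.

Lemma orbit_cauchy s e : 0 < e -> exists N, forall p q, (N <= p)%N -> (N <= q)%N ->
  d (orbit s p) (orbit s q) < e.
Proof.
move=> e0; have e20 : 0 < e / 2 by rewrite divr_gt0.
have [N _ hN] := cvgr0_norm_lt _ (series_tail_cvg0 (hsum K_gt0)) _ e20.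
have tailN : tail N < e / 2 by rewrite -[tail N]ger0_norm //; exact: (hN N (leqnn N)).
exists N.+1 => -[|p] [|q] //; rewrite !ltnS => Np Nq.
apply: le_lt_trans (d_triangle _ (orbit s N.+1) _) _; rewrite (splitr e) ltrD //.
  by rewrite dC; apply: le_lt_trans (orbit_dist s Np) tailN.
exact: le_lt_trans (orbit_dist s Nq) tailN.
Qed.

Lemma exists_code_map : exists pi : (nat -> 'I_n) -> X,
  forall s k, d (orbit s k.+1) (pi s) <= tail k.
Proof.
have [pi hpi] := choice (fun s => hcomp (@orbit_cauchy s)).
exists pi => s k; apply/ler_addgt0Pr => e e0; have [N hN] := hpi s e e0.
apply: le_trans (d_triangle _ (orbit s (maxn N k).+1) _) _.
apply: lerD; first by rewrite orbit_dist ?leq_maxr.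
by rewrite ltW // hN // leqW // leq_maxl.
Qed.

Section CodeMap.
Variable pi : (nat -> 'I_n) -> X.
Hypothesis pi_tail : forall s k, d (orbit s k.+1) (pi s) <= tail k.

Lemma code_map_cylinder s t k : cylinder k.+2 t s -> d (pi s) (pi t) <= tail k + tail k.
Proof.
move=> st; have orbit_st : orbit s k.+1 = orbit t k.+1.
  by apply: eq_word_comp => i /andP[_ ik]; apply: st; rewrite -add1n.
apply: le_trans (d_triangle _ (orbit s k.+1) _) _.
by apply: lerD; [rewrite dC | rewrite orbit_st].
Qed.

Lemma code_map_ucont e : 0 < e -> exists k, forall s t,
  cylinder k t s -> d (pi s) (pi t) < e.
Proof.
move=> e0; have e20 : 0 < e / 2 by rewrite divr_gt0.
have [N _ hN] := cvgr0_norm_lt _ (series_tail_cvg0 (hsum K_gt0)) _ e20.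
have tailN : tail N < e / 2 by rewrite -[tail N]ger0_norm //; exact: (hN N (leqnn N)).
exists N.+2 => s t /code_map_cylinder st; apply: le_lt_trans st _.
by rewrite (splitr e) ltrD.
Qed.

Lemma word_comp_code_map_dist (A : set X) c s k a : (forall b, A b -> d a0 b <= c) ->
  A a -> d (word_comp f s 1 k.+1 a) (pi s) <= phi_comp phi k.+1 (Num.max c 1) + tail k.
Proof.
move=> hc Aa; apply: le_trans (d_triangle _ (orbit s k.+1) _) _.
apply: lerD => //; apply: le_trans (word_comp_contraction hmet hphi hcontr _ _ _ _ (leqnn 1)) _.
by apply: phi_comp_from_le => //; rewrite dC le_max hc.
Qed.

Lemma cvg_backward_traj_code_image (r0 : 'I_n) (A : set X) : inHX d A ->
  (fun k => hausdorff d (backward_traj f k A) (range pi)) @ \oo --> 0.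
Proof.
move=> [[a Aa] cA]; have [c hc] := dcompact_bounded hmet cA a0.
have c1_gt0 : 0 < Num.max c 1 by rewrite lt_max ltr01 orbT.
have range_pi0 : range pi !=set0 by exists (pi (fun=> r0)), (fun=> r0).
rewrite -cvg_shiftS; apply: (@squeeze_cvgr _ _ _ _ (fun=> 0)
  (fun k => phi_comp phi k.+1 (Num.max c 1) + tail k)); last 2 first.
- exact: cvg_cst.
- rewrite -[0]addr0; apply: cvgD; first exact: cvg_series_cvg_0 (hsum c1_gt0).
  exact: series_tail_cvg0 (hsum K_gt0).
apply: nearW => k /=; apply/andP; split.
  exact: le_trans (hexcess_ge0 hmet _ range_pi0) (hexcess_le_hausdorff _ _ _).
apply: hausdorff_le; apply: (hexcess_le hmet) => //.
- exists (word_comp f (fun=> r0) 1 k.+1 a).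
  by apply/(backward_trajP f r0); exists (fun=> r0), a.
- move=> _ /(backward_trajP f r0) [s [b Ab ->]]; exists (pi s); first by exists s.
  exact: word_comp_code_map_dist hc Ab.
- move=> _ [s _ <-]; exists (word_comp f s 1 k.+1 a).
    by apply/(backward_trajP f r0); exists s, a.
  by rewrite dC; exact: word_comp_code_map_dist hc Aa.
Qed.

End CodeMap.
End Attractor.

Theorem corollary4p4 (R : realType) (X : Type) (d : X -> X -> R)
  (hmet : is_metric d) (hcomp : metric_complete d)
  (n : nat) (hn : (0 < n)%N)
  (f : 'I_n -> nat -> X -> X) (phi : 'I_n -> nat -> R -> R)
  (hcont : forall r i, (1 <= i)%N -> dcontinuous d (f r i))
  (hphi : forall r i, (1 <= i)%N -> comparison_function (phi r i))
  (hcontr : forall r i, (1 <= i)%N -> phi_contraction d (phi r i) (f r i))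
  (A1 : set X) (hA1 : inHX d A1)
  (hbnd : exists M : R, forall i, (1 <= i)%N ->
            hausdorff d (IFS_image f i A1) A1 <= M)
  (hsum : forall t : R, 0 < t ->
            cvg (series (fun k : nat => phi_comp phi k.+1 t : R^o) @ \oo)) :
  exists Astar : set X,
    [/\ inHX d Astar,
        (forall A, inHX d A ->
           (fun k : nat => hausdorff d (backward_traj f k A) Astar) @ \oo --> 0) &
        (forall B, inHX d B ->
           (forall A, inHX d A ->
              (fun k : nat => hausdorff d (backward_traj f k A) B) @ \oo --> 0) ->
           B = Astar)].
Proof.
pose r0 : 'I_n := Ordinal hn.
have [[a0 A1a0] cA1] := hA1; have bA1 := dcompact_bounded hmet cA1.
have [K K_gt0 hK] := IFS_base_point_bounded hmet hphi hcontr A1a0 bA1 hbnd.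
have [pi pi_tail] := exists_code_map hmet hcomp hphi hcontr K_gt0 hK hsum.
have pi_cvg := cvg_backward_traj_code_image hmet hphi hcontr K_gt0 hsum pi_tail r0.
have HX_pi : inHX d (range pi).
  split; first by exists (pi (fun=> r0)), (fun=> r0).
  exact: dcompact_code_image (code_map_ucont hmet K_gt0 hsum pi_tail) r0.
exists (range pi); split => // B hB /(_ A1 hA1) B_cvg.
apply: (hausdorff_cvg_unique hmet _ _ HX_pi hB (pi_cvg A1 hA1) B_cvg) => k.
  exists (word_comp f (fun=> r0) 1 k a0).
  by apply/(backward_trajP f r0); exists (fun=> r0), a0.
exact: (backward_traj_bounded hmet hphi hcontr k bA1).
Qed.
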